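(* Let $\mathsf P$ be a network coding problem. A rate-capacity tuple $(\lambda,\omega)$ is $0$-achievable subject to a routing constraint if and only if \[(\lambda,\omega)\in\mathsf{CL}\big(\mathrm{proj}_{\mathsf P}[\Gamma_{AA}\cap\mathcal C_T(\mathsf P)\cap\mathcal C_D(\mathsf P)\cap\mathcal C_I(\mathsf P)]\big).\]
   Context: A network is $\mathsf G=(\mathcal V,\mathcal E)$, $\mathcal V$ a finite set of nodes, $\mathcal E$ a finite set of hyperedges, each $e$ with tail $\mathrm{tail}(e)\in\mathcal V$ and head $\mathrm{head}(e)\subseteq\mathcal V$, without directed cycles. A connection constraint $\mathsf M=(\mathcal S,O,D)$: finite source index set $\mathcal S$, $O:\mathcal S\to2^{\mathcal V}$ (where source $s$ is available), $D:\mathcal S\to2^{\mathcal V}$ (sinks of $s$). $\mathsf P=(\mathsf G,\mathsf M)$. Sources are imaginary edges with $\mathrm{head}(s)=O(s)$; $\mathrm{in}(e)=\{f\in\mathcal S\cup\mathcal E:\mathrm{tail}(e)\in\mathrm{head}(f)\}$ for $e\in\mathcal E$, $\mathrm{in}(u)=\{f\in\mathcal S\cup\mathcal E:u\in\mathrm{head}(f)\}$ for $u\in\mathcal V$. A rate-capacity tuple is $(\lambda,\omega)$, $\lambda:\mathcal S\to\mathbb R_{\ge0}$, $\omega:\mathcal E\to\mathbb R_{\ge0}$. A routing subnetwork is a subset $\mathcal T\subseteq\mathcal S\cup\mathcal E$ with $|\mathcal T\cap\mathcal S|=1$ (the unique source in it is denoted $\nu(\mathcal T)$) such that $\mathrm{in}(e)\cap\mathcal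 T\ne\emptyset$ for every $e\in\mathcal T\cap\mathcal E$. A tuple $(\lambda,\omega)$ is $0$-achievable subject to a routing constraint if there is a (finite) collection of routing subnetworks $\mathcal T_i$ with capacities $c_i\ge0$ such that: (R1) $\omega(e)\ge\sum_{i:e\in\mathcal T_i}c_i$ for every $e\in\mathcal E$; (R2) for every $i$ and every $u\in D(\nu(\mathcal T_i))$ there is $e\in\mathcal T_i$ with $u\in\mathrm{head}(e)$; (R3) $\lambda(s)=\sum_{i:\nu(\mathcal T_i)=s}c_i$ for every $s\in\mathcal S$. $\mathcal H[\mathcal S\cup\mathcal E]$ is the set of real functions on subsets of $\mathcal S\cup\mathcal E$; $g(\alpha\mid\beta)=g(\alpha\cup\beta)-g(\beta)$. A function $h$ is atomic if there is $\mathcal T\subseteq\mathcal S\cup\mathcal E$ with $h(\beta)=1$ when $\beta\cap\mathcal T\neq\emptyset$ and $h(\beta)=0$ otherwise; it is almost atomic if $h=\sum_ic_ih^i$ (finite sum) with $c_i\ge0$ and each $h^i$ atomic. $\Gamma_{AA}$ is the set of almost atomic functions. $\mathcal C_I(\mathsf P)=\{h:h(\mathcal S)=\sum_sh(s)\}$, $\mathcal C_T(\mathsf P)=\{h:h(e\mid\mathrm{in}(e))=0\ \forall e\in\mathcal E\}$, $\mathcal C_D(\mathsf P)=\{h:h(s\mid\mathrm{in}(u))=0\ \forall s,u\in D(s)\}$. $\mathrm{proj}_{\mathsf P}[h]=(h(s),s\in\mathcal S;h(e),e\in\mathcal E)$, applied elementwise to sets. For a set $\mathcal R$ of tuples, $\mathsf{CL}(\mathcal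 R)$ is the set of $(\lambda,\omega)$ such that there exist $(\lambda^n,\omega^n)\in\mathcal R$ and $c_n>0$ with $\lim_nc_n\omega^n(e)\le\omega(e)$ and $\lim_nc_n\lambda^n(s)\ge\lambda(s)$ for all $e,s$. *)

From HB Require Import structures.
From mathcomp Require Import all_boot all_order all_algebra.
From mathcomp Require Import boolp reals topology normedtype sequences.

Set Implicit Arguments.
Unset Strict Implicit.
Unset Printing Implicit Defensive.

Import Order.TTheory GRing.Theory Num.Theory.
Import numFieldNormedType.Exports.
Local Open Scope ring_scope.
Local Open Scope classical_set_scope.

(* A network coding problem P = (G, M):
   nodes V, hyperedges E with tail(e) in V and head(e) subset of V,
   source indices S with O(s) (where s is available) and D(s) (sinks of s). *)
Record problem := Problem {
  node : finType;
  edge : finType;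
  src  : finType;
  tail : edge -> node;
  head : edge -> {set node};
  orig : src -> {set node};
  dest : src -> {set node}
}.

(* The ground set S ∪ E (disjoint union); sources are imaginary edges. *)
Definition SE (P : problem) : finType := (src P + edge P)%type.

Definition headf (P : problem) (f : SE P) : {set node P} :=
  match f with inl s => orig s | inr e => head e end.

Definition in_edge (P : problem) (e : edge P) : {set SE P} :=
  [set f : SE P | tail e \in headf f].

Definition in_node (P : problem) (u : node P) : {set SE P} :=
  [set f : SE P | u \in headf f].

Definition step (P : problem) : rel (node P) :=
  fun u v => [exists e : edge P, (tail e == u) && (v \in head e)].

Definition acyclic (P : problem) : Prop :=
  forall u v : node P, @step P u v -> ~~ connect (@step P) v u.

Definition routing_subnetwork (P : problem) (T : {set SE P}) : Prop :=
  #|[set s : src P | inl s \in T]| = 1%N /\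
  (forall e : edge P, inr e \in T -> in_edge e :&: T != set0).

(* 0-achievability subject to a routing constraint.  Since each T_i contains
   exactly one source, "nu(T_i) = s" is expressed as "inl s \in T_i". *)
Definition achievable0 (R : realType) (P : problem)
    (lam : src P -> R) (om : edge P -> R) : Prop :=
  exists (k : nat) (T : 'I_k -> {set SE P}) (c : 'I_k -> R),
    [/\ (forall i, routing_subnetwork (T i)),
        (forall i, 0 <= c i),
        (forall e : edge P, \sum_(i | inr e \in T i) c i <= om e),
        (forall i (s : src P) (u : node P), inl s \in T i -> u \in dest s ->
            exists2 f : SE P, f \in T i & u \in headf f)
      &
        (forall s : src P, lam s = \sum_(i | inl s \in T i) c i)].

Definition setfun (R : realType) (P : problem) := {set SE P} -> R.

Definition condf (R : realType) (P : problem) (g : setfun R P)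
    (a b : {set SE P}) : R := g (a :|: b) - g b.

Definition atomic_fun (R : realType) (P : problem) (T : {set SE P}) : setfun R P :=
  fun b => if b :&: T != set0 then 1 else 0.

Definition is_atomic (R : realType) (P : problem) (h : setfun R P) : Prop :=
  exists T : {set SE P}, h = atomic_fun R T.

Definition almost_atomic (R : realType) (P : problem) (h : setfun R P) : Prop :=
  exists (k : nat) (c : 'I_k -> R) (hs : 'I_k -> setfun R P),
    [/\ (forall i, 0 <= c i), (forall i, is_atomic (hs i))
      & h = fun b => \sum_(i < k) c i * hs i b].

Definition C_I (R : realType) (P : problem) (h : setfun R P) : Prop :=
  h [set f : SE P | if f is inl _ then true else false]
  = \sum_(s : src P) h [set (inl s : SE P)].

Definition C_T (R : realType) (P : problem) (h : setfun R P) : Prop :=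
  forall e : edge P, condf h [set (inr e : SE P)] (in_edge e) = 0.

Definition C_D (R : realType) (P : problem) (h : setfun R P) : Prop :=
  forall (s : src P) (u : node P), u \in dest s ->
    condf h [set (inl s : SE P)] (in_node u) = 0.

Definition tuple_t (R : realType) (P : problem) : Type :=
  ((src P -> R) * (edge P -> R))%type.

Definition proj (R : realType) (P : problem) (h : setfun R P) : tuple_t R P :=
  (fun s => h [set (inl s : SE P)], fun e => h [set (inr e : SE P)]).

Definition proj_region (R : realType) (P : problem) (x : tuple_t R P) : Prop :=
  exists h : setfun R P,
    [/\ almost_atomic h, C_T h, C_D h, C_I h & proj h = x].

Definition CL (R : realType) (P : problem) (Rg : tuple_t R P -> Prop)
    (x : tuple_t R P) : Prop :=
  exists (y : nat -> tuple_t R P) (c : nat -> R),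
    [/\ (forall n, Rg (y n)), (forall n, 0 < c n),
        (forall e : edge P, exists2 l : R,
            (fun n => c n * (y n).2 e) @ \oo --> l & l <= x.2 e)
      & (forall s : src P, exists2 l : R,
            (fun n => c n * (y n).1 s) @ \oo --> l & x.1 s <= l)].

(* An almost atomic function is a nonnegative combination of atomic functions
   of sets T.  Each of C_T, C_D and C_I is a linear equation which every
   atomic function satisfies up to a defect of constant sign, so in a
   combination satisfying them every T of positive weight satisfies them on
   its own: every edge of T has a predecessor in T, T meets every sink of its
   sources, and T contains at most one source.  By acyclicity a nonempty such
   T contains a source, so it is a routing subnetwork obeying (R2).  Hence the
   projected region consists exactly of the load vectors of nonnegative
   weightings of such subnetworks.  For the closure, the weights along a
   sequence witnessing CL are bounded by the total source rate, so a cluster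
   point of them (Tychonoff) is a weighting whose source loads dominate lam
   and whose edge loads are dominated by om; scaling the weight of each
   subnetwork down by lam(s)/load(s) for its source s gives a routing
   solution. *)
From HB Require Import structures.
From mathcomp Require Import all_boot all_order all_algebra.
From mathcomp Require Import boolp reals topology normedtype sequences.
Set Implicit Arguments.
Unset Strict Implicit.
Unset Printing Implicit Defensive.

Import Order.TTheory GRing.Theory Num.Theory.
Import numFieldNormedType.Exports.
Local Open Scope ring_scope.

Lemma wsum_le_eq (R : numDomainType) (I : finType) (c F G : I -> R) :
  (forall i, 0 <= c i) -> (forall i, G i <= F i) ->
  \sum_i c i * F i = \sum_i c i * G i -> forall i, c i != 0 -> F i = G i.
Proof.
move=> c0 GF /eqP; rewrite -subr_eq0 -sumrB => /eqP gap0 i ci.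
have /psumr_eq0P gap_i : forall j, true -> 0 <= c j * (F j - G j).
  by move=> j _; rewrite mulr_ge0 ?subr_ge0.
move: gap0; under eq_bigr do rewrite -mulrBr.
move=> /gap_i/(_ i isT)/eqP.
by rewrite mulf_eq0 (negPf ci) subr_eq0 => /eqP.
Qed.

Section AtomicFunctions.
Variables (R : realType) (P : problem).

Local Notation all_sources := [set f : SE P | if f is inl _ then true else false].

Definition sources_of (T : {set SE P}) : {set src P} := [set s | inl s \in T].

Lemma in_sources_of (T : {set SE P}) (s : src P) : (s \in sources_of T) = (inl s \in T).
Proof. by rewrite inE. Qed.

Definition wsum (I : finType) (c : I -> R) (g : I -> setfun R P) : setfun R P :=
  fun b => \sum_i c i * g i b.

Lemma setI1_neq0 (T : {set SE P}) (x : SE P) : ([set x] :&: T != set0) = (x \in T).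
Proof.
apply/set0Pn/idP => [[y]|xT]; first by rewrite !inE => /andP[/eqP ->].
by exists x; rewrite !inE eqxx.
Qed.

Lemma atomic_funE (T b : {set SE P}) : atomic_fun R T b = (b :&: T != set0)%:R.
Proof. by rewrite /atomic_fun; case: ifP. Qed.

Lemma atomic_fun1 (T : {set SE P}) (x : SE P) : atomic_fun R T [set x] = (x \in T)%:R.
Proof. by rewrite atomic_funE setI1_neq0. Qed.

Lemma atomic_fun_subU (T a b : {set SE P}) :
  atomic_fun R T b <= atomic_fun R T (a :|: b).
Proof.
rewrite !atomic_funE ler_nat setIUl setU_eq0 negb_and.
by case: (b :&: T != set0); rewrite ?orbT.
Qed.

Lemma atomic_fun_sources (T : {set SE P}) :
  atomic_fun R T all_sources = (0 < #|sources_of T|)%N%:R.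
Proof.
rewrite atomic_funE card_gt0; congr (nat_of_bool _ )%:R.
apply/set0Pn/set0Pn => [[[s|e]]|[s]]; rewrite !inE ?in_sources_of //.
  by move=> sT; exists s; rewrite in_sources_of.
by move=> sT; exists (inl s); rewrite !inE.
Qed.

Lemma sum_atomic_fun_sources (T : {set SE P}) :
  \sum_s atomic_fun R T [set inl s] = #|sources_of T|%:R.
Proof.
under eq_bigr do rewrite atomic_fun1.
rewrite -natr_sum -sum1_card [in RHS]big_mkcond /=.
by congr (_%:R); apply: eq_bigr => s _; rewrite inE; case: (_ \in _).
Qed.

Lemma wsum_atomic1 (I : finType) (c : I -> R) (T : I -> {set SE P}) (x : SE P) :
  wsum c (fun i => atomic_fun R (T i)) [set x] = \sum_(i | x \in T i) c i.
Proof.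
rewrite /wsum [RHS]big_mkcond; apply: eq_bigr => i _.
by rewrite atomic_fun1; case: (_ \in _); rewrite ?mulr1 ?mulr0.
Qed.

Lemma condf_wsum (I : finType) (c : I -> R) (g : I -> setfun R P) a b :
  condf (wsum c g) a b = \sum_i c i * condf (g i) a b.
Proof. by rewrite /condf /wsum -sumrB; apply: eq_bigr => i _; rewrite mulrBr. Qed.

Lemma condf_atomic1 (T b : {set SE P}) (x : SE P) :
  condf (atomic_fun R T) [set x] b = 0 <-> (x \in T -> b :&: T != set0).
Proof.
rewrite /condf !atomic_funE setIUl setU_eq0 negb_and setI1_neq0.
case: (x \in T); case: (b :&: T != set0); rewrite /= ?mulr1n ?mulr0n ?subrr ?subr0 //.
by split=> [e10 _|/(_ isT)//]; have := oner_neq0 R; rewrite e10 eqxx.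
Qed.

Section Combinations.
Variables (I : finType) (c : I -> R).

Lemma C_T_wsum (g : I -> setfun R P) :
  (forall i, c i != 0 -> C_T (g i)) -> C_T (wsum c g).
Proof.
move=> Cg e; rewrite condf_wsum big1 // => i _.
by have [->|/Cg ->] := eqVneq (c i) 0; rewrite ?mul0r ?mulr0.
Qed.

Lemma C_D_wsum (g : I -> setfun R P) :
  (forall i, c i != 0 -> C_D (g i)) -> C_D (wsum c g).
Proof.
move=> Cg s u us; rewrite condf_wsum big1 // => i _.
by have [->|/Cg -> //] := eqVneq (c i) 0; rewrite ?mul0r ?mulr0.
Qed.

Lemma C_I_wsum (g : I -> setfun R P) :
  (forall i, c i != 0 -> C_I (g i)) -> C_I (wsum c g).
Proof.
move=> Cg; rewrite /C_I /wsum exchange_big; apply: eq_bigr => i _.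
have [->|/Cg ->] := eqVneq (c i) 0; last by rewrite mulr_sumr.
by rewrite mul0r big1 // => s _; rewrite mul0r.
Qed.

Hypothesis c_ge0 : forall i, 0 <= c i.
Variable T : I -> {set SE P}.
Local Notation h := (wsum c (fun i => atomic_fun R (T i))).

Lemma condf_wsum_atomic_eq0 a b i :
  condf h a b = 0 -> c i != 0 -> condf (atomic_fun R (T i)) a b = 0.
Proof.
move=> /eqP; rewrite subr_eq0 => /eqP hab ci.
by rewrite /condf (wsum_le_eq c_ge0 (fun j => atomic_fun_subU _ _ _) hab ci) subrr.
Qed.

Lemma C_T_wsum_atomic i : C_T h -> c i != 0 -> C_T (atomic_fun R (T i)).
Proof. by move=> CT ci e; apply: condf_wsum_atomic_eq0. Qed.

Lemma C_D_wsum_atomic i : C_D h -> c i != 0 -> C_D (atomic_fun R (T i)).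
Proof. by move=> CD ci s u us; apply: condf_wsum_atomic_eq0 (CD s u us) ci. Qed.

Lemma C_I_wsum_atomic i : C_I h -> c i != 0 -> C_I (atomic_fun R (T i)).
Proof.
rewrite /C_I /wsum exchange_big /= => CI ci; symmetry.
pose nsrc j := \sum_s atomic_fun R (T j) [set inl s].
apply: (@wsum_le_eq _ _ c nsrc (fun j => atomic_fun R (T j) all_sources) c_ge0 _ _ i ci).
- move=> j; rewrite /nsrc atomic_fun_sources sum_atomic_fun_sources ler_nat.
  by case: #|_|.
- by rewrite CI; apply: eq_bigr => j _; rewrite mulr_sumr.
Qed.

End Combinations.

Lemma atomic_C_T (T : {set SE P}) :
  C_T (atomic_fun R T) <-> forall e, inr e \in T -> in_edge e :&: T != set0.
Proof. by split=> H e; [apply/condf_atomic1/H | apply/condf_atomic1/H]. Qed.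

Lemma atomic_C_D (T : {set SE P}) :
  C_D (atomic_fun R T) <->
  forall s u, inl s \in T -> u \in dest s -> in_node u :&: T != set0.
Proof.
split=> H s u; first by move=> sT us; apply: (condf_atomic1 _ _ _).1 sT; apply: H.
by move=> us; apply/condf_atomic1 => sT; apply: H sT us.
Qed.

Lemma atomic_C_I (T : {set SE P}) :
  C_I (atomic_fun R T) <-> (#|sources_of T| <= 1)%N.
Proof.
rewrite /C_I atomic_fun_sources sum_atomic_fun_sources.
by case: #|_| => [|[|n]]; split=> // /eqP; rewrite eqr_nat.
Qed.

End AtomicFunctions.

Section Routing.
Variables (R : realType) (P : problem).

(* A nonempty set containing a predecessor of each of its edges contains a
   source: otherwise an edge of T with the fewest ancestors in the acyclic
   graph would have a predecessor edge in T with strictly fewer. *)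
Lemma exists_source (acyc : acyclic P) (T : {set SE P}) : T != set0 ->
  (forall e, inr e \in T -> in_edge e :&: T != set0) -> exists s, inl s \in T.
Proof.
move=> /set0Pn [x xT] predT; apply/not_existsP => nosrc.
have [e0 e0T] : exists e0, inr e0 \in T.
  by case: x xT => [s sT|e eT]; [case: (nosrc s) | exists e].
pose ancestors (e : edge P) := #|[set v | connect (@step P) v (tail e)]|.
case: (@arg_minnP _ e0 (fun e => inr e \in T) ancestors e0T) => e eT emin.
have /set0Pn [f] := predT e eT; rewrite !inE => /andP [].
case: f => [s _ /nosrc []|e' tail_e' e'T].
have st : @step P (tail e') (tail e) by apply/existsP; exists e'; rewrite eqxx.
have := emin e' e'T; rewrite leqNgt => /negP; apply.
apply: proper_card; apply/properP; split.
  by apply/subsetP => v; rewrite !inE => /connect_trans; apply; apply: connect1.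
by exists (tail e); rewrite inE ?connect0 // acyc.
Qed.

Definition routingb (T : {set SE P}) : bool :=
  [&& #|sources_of T| == 1%N,
      [forall e, (inr e \in T) ==> (in_edge e :&: T != set0)] &
      [forall s, forall u,
         (inl s \in T) && (u \in dest s) ==> (in_node u :&: T != set0)]].

Lemma meets_in_nodeP (u : node P) (T : {set SE P}) :
  reflect (exists2 f, f \in T & u \in headf f) (in_node u :&: T != set0).
Proof.
apply: (iffP (@set0Pn _ (in_node u :&: T))) => [[f]|[f fT uf]].
  by rewrite !inE => /andP [uf fT]; exists f.
by exists f; rewrite !inE uf fT.
Qed.

Lemma routingP (T : {set SE P}) :
  reflect (routing_subnetwork T /\
           forall s u, inl s \in T -> u \in dest s -> exists2 f, f \in T & u \in headf f)
          (routingb T).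
Proof.
apply: (iffP and3P) => [[/eqP src1 /forallP predT /forallP sinksT]|[[src1 predT] sinksT]].
  split; first by split=> // e; apply/implyP.
  by move=> s u sT us; apply/meets_in_nodeP/(implyP (forallP (sinksT s) u)); rewrite sT.
split; first exact/eqP.
  by apply/forallP => e; apply/implyP/predT.
apply/forallP => s; apply/forallP => u; apply/implyP => /andP [sT us].
by apply/meets_in_nodeP; apply: sinksT sT us.
Qed.

Lemma routingb_sources1 (T : {set SE P}) :
  routingb T -> exists s0, forall s, (inl s \in T) = (s == s0).
Proof.
case/and3P => /cards1P [s0 srcT] _ _; exists s0 => s.
by rewrite -in_set1 -srcT in_sources_of.
Qed.

Lemma routingb_atomic (T : {set SE P}) : routingb T ->
  [/\ C_T (atomic_fun R T), C_D (atomic_fun R T) & C_I (atomic_fun R T)].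
Proof.
case/and3P => src1 /forallP predT /forallP sinksT; split.
- by apply/atomic_C_T => e; apply/implyP.
- by apply/atomic_C_D => s u sT us; apply: (implyP (forallP (sinksT s) u)); rewrite sT.
- by apply/atomic_C_I; rewrite (eqP src1).
Qed.

Lemma atomic_routingb (acyc : acyclic P) (T : {set SE P}) : T != set0 ->
  C_T (atomic_fun R T) -> C_D (atomic_fun R T) -> C_I (atomic_fun R T) ->
  routingb T.
Proof.
move=> T0 /atomic_C_T predT /atomic_C_D sinksT /atomic_C_I src_le1.
have [s sT] := exists_source acyc T0 predT.
apply/and3P; split.
- by rewrite eqn_leq src_le1 card_gt0; apply/set0Pn; exists s; rewrite in_sources_of.
- by apply/forallP => e; apply/implyP/predT.
- by apply/forallP => s'; apply/forallP => u; apply/implyP => /andP[]; apply: sinksT.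
Qed.

End Routing.

Section Weights.
Variables (R : realType) (P : problem).
Implicit Types (w : {set SE P} -> R) (x : SE P).

Definition routing_weight w : Prop :=
  (forall T, 0 <= w T) /\ (forall T, ~~ routingb T -> w T = 0).

Definition load w x : R := \sum_(T : {set SE P} | x \in T) w T.

Definition load_tuple w : tuple_t R P :=
  (fun s => load w (inl s), fun e => load w (inr e)).

Lemma routing_weight_support w T : routing_weight w -> w T != 0 -> routingb T.
Proof. by case=> _ w_routing; apply: contraTT => /w_routing ->; rewrite eqxx. Qed.

Lemma routing_weight_scale w (k : R) :
  0 <= k -> routing_weight w -> routing_weight (fun T => k * w T).
Proof.
move=> k0 [w0 w_routing]; split=> T; first exact: mulr_ge0.
by move=> /w_routing ->; rewrite mulr0.
Qed.

Lemma load_scale w (k : R) x : load (fun T => k * w T) x = k * load w x.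
Proof. by rewrite /load mulr_sumr. Qed.

Lemma routing_weight_le_sources w T :
  routing_weight w -> w T <= \sum_s load w (inl s).
Proof.
case=> w0 w_routing; have load0 x : 0 <= load w x by apply: sumr_ge0.
have [rT|/w_routing ->] := boolP (routingb T); last exact: sumr_ge0.
have [s0 srcT] := routingb_sources1 rT.
have s0T : inl s0 \in T by rewrite srcT.
rewrite (bigD1 s0) //= -[w T]addr0; apply: lerD; last exact: sumr_ge0.
by rewrite /load (bigD1 T) //= lerDl; apply: sumr_ge0.
Qed.

Definition weight_of (I : finType) (T : I -> {set SE P}) (c : I -> R) :
  {set SE P} -> R :=
  fun X => if routingb X then \sum_(i | T i == X) c i else 0.

Lemma routing_weight_of (I : finType) (T : I -> {set SE P}) (c : I -> R) :
  (forall i, 0 <= c i) -> routing_weight (weight_of T c).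
Proof.
rewrite /weight_of => c0; split=> X; last by move/negPf ->.
by case: ifP => _ //; apply: sumr_ge0.
Qed.

Lemma load_weight_of (I : finType) (T : I -> {set SE P}) (c : I -> R) x :
  (forall i, x \in T i -> c i != 0 -> routingb (T i)) ->
  load (weight_of T c) x = \sum_(i | x \in T i) c i.
Proof.
move=> T_routing; transitivity (\sum_(i | (x \in T i) && routingb (T i)) c i).
  rewrite /load /weight_of -big_mkcondr.
  rewrite (partition_big T (fun X => (x \in X) && routingb X)) //.
  apply: eq_bigr => X /andP [xX rX]; apply: eq_bigl => i.
  by case: eqVneq => [->|]; rewrite ?xX ?rX ?andbF.
rewrite big_mkcondr; apply: eq_bigr => i xT.
by case: ifP => // /negbT; have [->|/(T_routing i xT) ->] := eqVneq (c i) 0.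
Qed.

Lemma load_wsum_atomic w x : wsum w (fun T => atomic_fun R T) [set x] = load w x.
Proof. exact: (wsum_atomic1 w id). Qed.

Lemma proj_region_routing_weight (acyc : acyclic P) (y : tuple_t R P) :
  proj_region y -> exists2 w, routing_weight w & load_tuple w = y.
Proof.
case=> h [[k [c [g [c0 g_atomic ->]]]] CT CD CI <-].
have /choice [T gE] : forall i, exists T, g i = atomic_fun R T.
  by move=> i; have [T ->] := g_atomic i; exists T.
have {}gE : g = fun i => atomic_fun R (T i) by apply: funext.
subst g.
have T_routing x i : x \in T i -> c i != 0 -> routingb (T i).
  move=> xT ci; apply: (atomic_routingb (R := R) acyc).
  - by apply/set0Pn; exists x.
  - exact: (C_T_wsum_atomic (T := T) c0 CT ci).
  - exact: (C_D_wsum_atomic (T := T) c0 CD ci).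
  - exact: (C_I_wsum_atomic (T := T) c0 CI ci).
exists (weight_of T c); first exact: routing_weight_of.
rewrite /load_tuple /proj; congr pair; apply: funext => ?;
  by rewrite load_weight_of; [exact: esym (wsum_atomic1 c T _) | exact: T_routing].
Qed.

Lemma load_tuple_proj_region w : routing_weight w -> proj_region (load_tuple w).
Proof.
move=> w_routing; have [w0 _] := w_routing.
have C_atomic T : w T != 0 ->
    [/\ C_T (atomic_fun R T), C_D (atomic_fun R T) & C_I (atomic_fun R T)].
  by move=> wT; apply/routingb_atomic/(routing_weight_support w_routing).
exists (wsum w (fun T => atomic_fun R T)); split.
- exists #|{set SE P}|, (fun i => w (enum_val i)), (fun i => atomic_fun R (enum_val i)).
  split=> //; first by move=> i; exists (enum_val i).
  apply: funext => b; rewrite /wsum.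
  by rewrite -(big_enum_val (fun T => w T * atomic_fun R T b)); apply: eq_bigl.
- by apply: C_T_wsum => T /C_atomic [].
- by apply: C_D_wsum => T /C_atomic [].
- by apply: C_I_wsum => T /C_atomic [].
- by rewrite /load_tuple /proj; congr pair; apply: funext => ?; rewrite load_wsum_atomic.
Qed.

Lemma achievable0_load (lam : src P -> R) (om : edge P -> R) :
  achievable0 lam om <->
  exists w, [/\ routing_weight w, forall s, load w (inl s) = lam s
               & forall e, load w (inr e) <= om e].
Proof.
split=> [[k [T [c [T_routing c0 R1 R2 R3]]]]|[w [w_routing w_lam w_om]]].
  have loadE x : load (weight_of T c) x = \sum_(i | x \in T i) c i.
    apply: load_weight_of => i _ _.
    by apply/routingP; split; [apply: T_routing | apply: R2].
  exists (weight_of T c); split; first exact: routing_weight_of.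
  - by move=> s; rewrite loadE R3.
  - by move=> e; rewrite loadE.
pose G := [pred X : {set SE P} | routingb X].
have G_routing (i : 'I_#|G|) : routingb (enum_val i).
  by have := enum_valP i; rewrite inE.
have loadE x : load w x = \sum_(i < #|G| | x \in enum_val i) w (enum_val i).
  rewrite -(big_enum_val_cond (A := G) (fun X => x \in X) w) /load.
  rewrite (bigID (@routingb P)) /= [X in _ + X]big1 ?addr0.
    by apply: eq_bigl => X; rewrite andbC.
  by move=> X /andP [_ /w_routing.2].
exists #|G|, enum_val, (fun i => w (enum_val i)); split=> [i|i|e|i s u|s].
- by have /routingP [] := G_routing i.
- by apply: w_routing.1.
- by rewrite -loadE.
- by have /routingP [_] := G_routing i; apply.
- by rewrite -loadE.
Qed.

End Weights.

Section Compactness.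
Import ArrowAsProduct classical_sets.
Local Open Scope classical_set_scope.

Lemma cluster_of_bounded_seq (R : realType) (I : finType) (a : nat -> I -> R) (M : R) :
  (forall n i, 0 <= a n i) -> (\forall n \near \oo, forall i, a n i <= M) ->
  exists2 p : I -> R, (forall i, 0 <= p i) &
    forall (A : pred I) (l : R),
      (fun n => \sum_(i | A i) a n i) @ \oo --> l -> \sum_(i | A i) p i = l.
Proof.
move=> a0 aM; pose K := [set f : I -> R | forall i, `[0, M] (f i)].
have cK : compact K.
  by apply: (@tychonoff I (fun _ => R) (fun _ => `[0, M])) => i; apply: segment_compact.
have aK : (a @ \oo) K.
  by apply: filterS aM => n anM i; rewrite /= in_itv /= a0 anM.
have [p [Kp]] := cK (a @ \oo) (fmap_proper_filter _ _) aK.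
rewrite cluster_cvgE /= => -[G PG [Gp FG]].
exists p => [i|A l al]; first by have := Kp i; rewrite /= in_itv /= => /andP[].
have sum_p : (fun f : I -> R => \sum_(i | A i) f i) @ G --> \sum_(i | A i) p i.
  apply: cvg_big => [|i _]; first exact: add_continuous.
  apply: cvg_trans; last exact: (@proj_continuous I (fun _ => R) i p).
  by apply: cvg_app; exact: Gp.
have sum_l : (fun f : I -> R => \sum_(i | A i) f i) @ G --> l.
  by move=> B /al; apply: FG.
exact: (cvg_unique (@Rhausdorff R) sum_p sum_l).
Qed.

End Compactness.

Local Open Scope classical_set_scope.

Lemma CL_of_le (R : realType) (P : problem) (Rg : tuple_t R P -> Prop)
    (x y : tuple_t R P) :
  Rg y -> (forall s, x.1 s <= y.1 s) -> (forall e, y.2 e <= x.2 e) -> CL Rg x.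
Proof.
move=> Rg_y y_lam y_om; exists (fun=> y), (fun=> 1); split=> // [e|s].
  by exists (y.2 e); [under eq_fun do rewrite mul1r; exact: cvg_cst | exact: y_om].
by exists (y.1 s); [under eq_fun do rewrite mul1r; exact: cvg_cst | exact: y_lam].
Qed.

Section Closure.
Variables (R : realType) (P : problem).
Implicit Types (lam : src P -> R) (om : edge P -> R).

Lemma CL_load_bound (acyc : acyclic P) lam om :
  CL (@proj_region R P) (lam, om) ->
  exists p, [/\ routing_weight p, forall s, lam s <= load p (inl s)
              & forall e, load p (inr e) <= om e].
Proof.
case=> y [c [y_region c_gt0 y_om y_lam]].
have /choice [w w_load] : forall n, exists w, routing_weight w /\ load_tuple w = y n.
  by move=> n; have [w ? ?] := proj_region_routing_weight acyc (y_region n); exists w.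
pose a n T := c n * w n T.
have a_routing n : routing_weight (a n).
  exact: routing_weight_scale (ltW (c_gt0 n)) (w_load n).1.
have a_lam s : (fun n => c n * (y n).1 s) = fun n => load (a n) (inl s).
  by apply: funext => n; rewrite load_scale -(w_load n).2.
have a_om e : (fun n => c n * (y n).2 e) = fun n => load (a n) (inr e).
  by apply: funext => n; rewrite load_scale -(w_load n).2.
have /choice [m m_lim] : forall s, exists m,
    (fun n => load (a n) (inl s)) @ \oo --> m /\ lam s <= m.
  by move=> s; have [m] := y_lam s; rewrite a_lam; exists m.
have total_lim : (fun n => \sum_s load (a n) (inl s)) @ \oo --> \sum_s m s.
  by apply: cvg_big => [|s _]; [exact: add_continuous | exact: (m_lim s).1].
have a_bounded : \forall n \near \oo, forall T, a n T <= \sum_s m s + 1.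
  have : \forall n \near \oo, \sum_s load (a n) (inl s) < \sum_s m s + 1.
    by apply: (cvgr_lt _ total_lim); rewrite ltrDl ltr01.
  apply: filterS => n total_lt T.
  exact: le_trans (routing_weight_le_sources T (a_routing n)) (ltW total_lt).
have [p p0 p_lim] := cluster_of_bounded_seq (fun n => (a_routing n).1) a_bounded.
exists p; split.
- split=> // T /negbTE T_not.
  have -> : p T = \sum_(X | X == T) p X by rewrite big_pred1_eq.
  apply: p_lim.
  rewrite (_ : (fun n => _) = fun=> 0); first exact: cvg_cst.
  by apply: funext => n; rewrite big_pred1_eq (a_routing n).2 ?T_not.
- by move=> s; have [m_cvg lam_le] := m_lim s; rewrite /load (p_lim _ _ m_cvg).
- move=> e; have [l l_cvg le_om] := y_om e; rewrite a_om in l_cvg.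
  by rewrite /load (p_lim _ _ l_cvg).
Qed.

Lemma load_rescale lam om p : (forall s, 0 <= lam s) -> routing_weight p ->
  (forall s, lam s <= load p (inl s)) -> (forall e, load p (inr e) <= om e) ->
  exists w, [/\ routing_weight w, forall s, load w (inl s) = lam s
              & forall e, load w (inr e) <= om e].
Proof.
move=> lam0 [p0 p_routing] p_lam p_om.
pose rho s := if load p (inl s) == 0 then 0 else lam s / load p (inl s).
have rho0 s : 0 <= rho s.
  rewrite /rho; case: ifPn => // _; apply: divr_ge0 => //.
  exact: le_trans (p_lam s).
have rho_le1 s : rho s <= 1.
  rewrite /rho; case: ifPn => // nz.
  have load_gt0 : 0 < load p (inl s) by rewrite lt0r nz /= (le_trans _ (p_lam s)).
  by rewrite ler_pdivrMr // mul1r.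
have rho_load s : rho s * load p (inl s) = lam s.
  rewrite /rho; case: ifPn => [/eqP load0|nz]; last by rewrite divfK.
  by rewrite mul0r; apply/eqP; rewrite eq_le lam0 -load0 p_lam.
pose rhoT (T : {set SE P}) := \sum_(s | inl s \in T) rho s.
have rhoT_src T s0 : routingb T -> inl s0 \in T -> rhoT T = rho s0.
  move=> rT s0T; have [s1 srcT] := routingb_sources1 rT.
  have s01 : s0 = s1 by apply/eqP; rewrite -srcT.
  by rewrite /rhoT (eq_bigl (fun s => s == s0)) ?big_pred1_eq // => s; rewrite srcT s01.
exists (fun T => p T * rhoT T); split.
- split=> T; first by rewrite mulr_ge0 ?sumr_ge0.
  by move/p_routing ->; rewrite mul0r.
- move=> s; rewrite -rho_load /load mulr_sumr; apply: eq_bigr => T sT.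
  have [rT|/p_routing ->] := boolP (routingb T); last by rewrite !mul0r mulr0.
  by rewrite (rhoT_src T s) // mulrC.
- move=> e; apply: le_trans (p_om e); apply: ler_sum => T _.
  have [rT|/p_routing ->] := boolP (routingb T); last by rewrite mul0r.
  have [s0 srcT] := routingb_sources1 rT.
  by rewrite (rhoT_src T s0) ?srcT // ler_piMr.
Qed.

End Closure.

Theorem theorem5 (R : realType) (P : problem) (acyc : acyclic P)
    (lam : src P -> R) (om : edge P -> R)
    (lam_ge0 : forall s, 0 <= lam s) (om_ge0 : forall e, 0 <= om e) :
  achievable0 lam om <-> CL (@proj_region R P) (lam, om).
Proof.
split=> [/achievable0_load [w [w_routing w_lam w_om]]|/(CL_load_bound acyc)].
  apply: (CL_of_le (y := load_tuple w)) => [|s|e]; last exact: w_om.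
    exact: load_tuple_proj_region.
  by rewrite /= w_lam.
case=> p [p_routing p_lam p_om]; apply/achievable0_load.
exact: load_rescale lam_ge0 p_routing p_lam p_om.
Qed.
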